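(* Every $\mathbb{F}_q$-subplane of $\mathrm{PG}(2,q^n)$ external to $l_\infty$ is equivalent, under the stabiliser of $l_\infty$ in $\mathrm{PGL}(3,q^n)$, to $\pi_{\omega,\lambda}$ for some $\omega,\lambda\in\mathbb{F}_{q^n}$ such that $1,\omega,\lambda$ are linearly independent over $\mathbb{F}_q$. Every $\mathbb{F}_q$-subplane tangent to $l_\infty$ is equivalent under this stabiliser to $\pi_{\omega,0}$ for some $\omega\in\mathbb{F}_{q^n}\setminus\mathbb{F}_q$.
   Context: Points of $\mathrm{PG}(2,q^n)$ are written $(a,b,c)_{\mathbb{F}_{q^n}}$; $l_\infty$ is the line $c=0$. An $\mathbb{F}_q$-subplane is a set $\{(su+tv+wz)_{\mathbb{F}_{q^n}}:(s,t,w)\in\mathbb{F}_q^3\setminus\{0\}\}$ for $\mathbb{F}_{q^n}$-independent $u,v,z\in\mathbb{F}_{q^n}^3$; it is external to $l_\infty$ if it has no point on $l_\infty$ and tangent if exactly one. For $\omega,\lambda\in\mathbb{F}_{q^n}$, $\pi_{\omega,\lambda}=\{(s,u,s\lambda+u\omega+t)_{\mathbb{F}_{q^n}}:(s,t,u)\in\mathbb{F}_q^3\setminus\{0\}\}$, the $\mathbb{F}_q$-subplane determined by the vectors $(1,0,\lambda),(0,1,\omega),(0,0,1)$. *)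

From HB Require Import structures.
From mathcomp Require Import all_boot all_order all_algebra all_field.
Set Implicit Arguments. Unset Strict Implicit. Unset Printing Implicit Defensive.
Import GRing.Theory.
Local Open Scope ring_scope.

(* F plays the role of F_q (a finite field), L the role of F_{q^n}, a finite
   dimensional extension of F (n = \dim {:L}).
   Points of PG(2,L) are represented by nonzero row vectors in 'rV[L]_3
   (homogeneous coordinates (a,b,c)); a collineation in PGL(3,L) is
   represented by an invertible matrix M acting by x |-> x *m M
   (scalar matrices act trivially on points). *)

Section PG2.
Variables (F : finFieldType) (L : fieldExtType F).

Definition vec3 (a b c : L) : 'rV[L]_3 := \row_(i < 3) [:: a; b; c]`_i.

Definition comb (u v z : 'rV[L]_3) (s t w : F) : 'rV[L]_3 :=
  s%:A *: u + t%:A *: v + w%:A *: z.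

Definition subplane_pt (u v z : 'rV[L]_3) (x : 'rV[L]_3) : Prop :=
  x != 0 /\ exists (c : L) (s t w : F), (s, t, w) != (0, 0, 0) /\
                                     x = c *: comb u v z s t w.

Definition on_linf (x : 'rV[L]_3) : Prop := x ord0 ord_max = 0.

Definition same_point (x y : 'rV[L]_3) : Prop := exists c : L, c != 0 /\ y = c *: x.

Definition external (u v z : 'rV[L]_3) : Prop :=
  forall x, subplane_pt u v z x -> ~ on_linf x.

Definition tangent (u v z : 'rV[L]_3) : Prop :=
  exists p, [/\ subplane_pt u v z p, on_linf p &
     forall x, subplane_pt u v z x -> on_linf x -> same_point p x].

Definition stab_linf (M : 'M[L]_3) : Prop :=
  M \in unitmx /\ forall x, on_linf x -> on_linf (x *m M).

Definition equiv_linf (P Q : 'rV[L]_3 -> Prop) : Prop :=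
  exists M, stab_linf M /\ forall x, P x <-> Q (x *m M).

(* pi_{omega,lambda} = {(s, u, s lambda + u omega + t)} *)
Definition pi_ol (omega lambda : L) : 'rV[L]_3 -> Prop :=
  subplane_pt (vec3 1 0 lambda) (vec3 0 1 omega) (vec3 0 0 1).

End PG2.

From HB Require Import structures.
From mathcomp Require Import all_boot all_order all_algebra all_field.
From mathcomp Require Import ring.
Set Implicit Arguments. Unset Strict Implicit. Unset Printing Implicit Defensive.
Import GRing.Theory.
Local Open Scope ring_scope.

(* Write x3 for the last coordinate of x and let B have rows u, v, z.  If z
   is off l_infinity, the collineation B^-1 T, where T has rows (1,0,u3/z3),
   (0,1,v3/z3), (0,0,1), sends u, v, z to the defining vectors of
   pi_{v3/z3, u3/z3} and only rescales the last coordinate, so it stabilises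
   l_infinity.  An external subplane has z off l_infinity and no nontrivial
   F-combination of u, v, z on l_infinity; the latter is the F-independence
   of 1, omega, lambda.  For a tangent subplane with point s u + t v + w z on
   l_infinity we may permute u, v, z so that s <> 0 and then replace u by
   this point, which makes lambda = 0; uniqueness of the point forces
   z3 <> 0 and omega outside F. *)

Section Free3.
Variables (K : fieldType) (V : vectType K).

Lemma free3P (u v z : V) :
  free [:: u; v; z] <->
  (forall a b c, a *: u + b *: v + c *: z = 0 -> [/\ a = 0, b = 0 & c = 0]).
Proof.
split=> [/freeP fr a b c E | fr].
  have /fr k0 : \sum_(i < 3) (fun i : 'I_3 => [:: a; b; c]`_i) i *: [:: u; v; z]`_i = 0.
    by rewrite !big_ord_recl big_ord0 /= addr0 addrA.
  by split; [exact: (k0 0) | exact: (k0 1) | exact: (k0 2)].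
apply/freeP => k; rewrite !big_ord_recl big_ord0 /= addr0 addrA => /fr [k0 k1 k2].
by case=> -[|[|[|//]]] i3; [rewrite -k0 | rewrite -k1 | rewrite -k2];
  congr k; apply: val_inj.
Qed.

Lemma free3_coord_inj (u v z : V) a b c a' b' c' : free [:: u; v; z] ->
  a *: u + b *: v + c *: z = a' *: u + b' *: v + c' *: z ->
  [/\ a = a', b = b' & c = c'].
Proof.
move=> /free3P fr E; have [] := fr (a - a') (b - b') (c - c').
  by rewrite !scalerBl [X in X + _]addrACA -opprD addrACA -opprD E subrr.
by move=> /subr0_eq -> /subr0_eq -> /subr0_eq ->.
Qed.

Lemma free3_shear (u v z : V) (a b c : K) : a != 0 -> free [:: u; v; z] ->
  free [:: a *: u + b *: v + c *: z; v; z].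
Proof.
move=> a0 /free3P fr; apply/free3P => x y w E.
have [] := fr (x * a) (x * b + y) (x * c + w).
  by rewrite -E !scalerDr !scalerDl !scalerA !addrA (addrAC _ (y *: v)).
move=> /eqP; rewrite mulf_eq0 (negPf a0) orbF => /eqP x0.
by rewrite x0 !mul0r !add0r.
Qed.

End Free3.

Definition rows3 (R : nmodType) (u v z : 'rV[R]_3) : 'M[R]_3 :=
  \matrix_(i < 3) [:: u; v; z]`_i.

Lemma rows3_unitmx (K : fieldType) (u v z : 'rV[K]_3) :
  free [:: u; v; z] -> rows3 u v z \in unitmx.
Proof.
move=> /free3P fr; rewrite -row_free_unit; apply: inj_row_free => y.
rewrite mulmx_sum_row !big_ord_recl big_ord0 addr0 addrA !rowK /= => /fr [y0 y1 y2].
apply/rowP => -[[|[|[|//]]] i3]; rewrite mxE; [rewrite -y0 | rewrite -y1 | rewrite -y2];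
  by congr (y _ _); apply: val_inj.
Qed.

Lemma coord3_mulmx (R : comPzRingType) (M : 'M[R]_3) (c : R) (x : 'rV[R]_3) :
  col ord_max M = c *: delta_mx ord_max 0 ->
  (x *m M) ord0 ord_max = x ord0 ord_max * c.
Proof.
move=> Mc; have -> : (x *m M) ord0 ord_max = (x *m col ord_max M) ord0 ord0.
  by rewrite !mxE; apply: eq_bigr => j _; rewrite mxE.
by rewrite Mc -scalemxAr -colE !mxE mulrC.
Qed.

Section Subplanes.
Variables (F : finFieldType) (L : fieldExtType F).
Implicit Types (u v z x : 'rV[L]_3) (M : 'M[L]_3).

Lemma alg_eq0 (a : F) : (a%:A == 0 :> L) = (a == 0).
Proof. exact: (fmorph_eq0 (in_alg L)). Qed.

Lemma algD (a b : F) : (a + b)%:A = a%:A + b%:A :> L.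
Proof. exact: (rmorphD (in_alg L)). Qed.

Lemma algM (a b : F) : (a * b)%:A = a%:A * b%:A :> L.
Proof. exact: (rmorphM (in_alg L)). Qed.

Lemma combE u v z s t w i j :
  comb u v z s t w i j = s%:A * u i j + t%:A * v i j + w%:A * z i j.
Proof. by rewrite !mxE. Qed.

Lemma comb_eq0 u v z s t w : free [:: u; v; z] ->
  comb u v z s t w = 0 -> [/\ s = 0, t = 0 & w = 0].
Proof. by move=> /free3P fr /fr[] /eqP + /eqP + /eqP; rewrite !alg_eq0 => /eqP-> /eqP-> /eqP->. Qed.

Lemma comb0 u v z : comb u v z 0 0 0 = 0.
Proof. by rewrite /comb !scale0r !addr0. Qed.

Lemma combC12 u v z s t w : comb v u z t s w = comb u v z s t w.
Proof. by rewrite /comb (addrC (t%:A *: v)). Qed.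

Lemma combC13 u v z s t w : comb z v u w t s = comb u v z s t w.
Proof. by rewrite /comb addrC (addrC (w%:A *: z)) addrA. Qed.

Lemma comb_shear u v z s t w a b d :
  comb (comb u v z s t w) v z a b d = comb u v z (a * s) (a * t + b) (a * w + d).
Proof. by apply/rowP => i; rewrite !combE !algD !algM; ring. Qed.

Lemma subplane_ptE u v z x :
  subplane_pt u v z x <-> x != 0 /\ exists c s t w, x = c *: comb u v z s t w.
Proof.
split; first by case=> x0 [c [s [t [w [_ Ex]]]]]; split=> //; exists c, s, t, w.
case=> x0 [c [s [t [w Ex]]]]; split=> //; exists c, s, t, w; split=> //.
by apply: contraNneq x0 => -[s0 t0 w0]; rewrite Ex s0 t0 w0 comb0 scaler0.
Qed.

Lemma subplane_pt_comb u v z s t w :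
  comb u v z s t w != 0 -> subplane_pt u v z (comb u v z s t w).
Proof. by move=> nz; apply/subplane_ptE; split=> //; exists 1, s, t, w; rewrite scale1r. Qed.

Lemma subplane_pt_sub u v z u' v' z' :
  (forall s t w, exists k s' t' w', comb u v z s t w = k *: comb u' v' z' s' t' w') ->
  forall x, subplane_pt u v z x -> subplane_pt u' v' z' x.
Proof.
move=> sub x /subplane_ptE[x0 [c [s [t [w Ex]]]]]; apply/subplane_ptE; split=> //.
have [k [s' [t' [w' E]]]] := sub s t w.
by exists (c * k), s', t', w'; rewrite Ex E scalerA.
Qed.

Lemma subplane_ptC12 u v z x : subplane_pt u v z x <-> subplane_pt v u z x.
Proof.
by split; apply: subplane_pt_sub => s t w; exists 1, t, s, w; rewrite scale1r combC12.
Qed.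

Lemma subplane_ptC13 u v z x : subplane_pt u v z x <-> subplane_pt z v u x.
Proof.
by split; apply: subplane_pt_sub => s t w; exists 1, w, t, s; rewrite scale1r combC13.
Qed.

Lemma subplane_pt_shear u v z s t w x : s != 0 ->
  subplane_pt u v z x <-> subplane_pt (comb u v z s t w) v z x.
Proof.
move=> s0; split; apply: subplane_pt_sub => a b d.
  exists 1, (a / s), (b - a / s * t), (d - a / s * w).
  by rewrite scale1r comb_shear mulfVK // !subrKC.
by exists 1, (a * s), (a * t + b), (a * w + d); rewrite scale1r comb_shear.
Qed.

Lemma subplane_pt_mulmx u v z x M : M \in unitmx ->
  subplane_pt u v z x <-> subplane_pt (u *m M) (v *m M) (z *m M) (x *m M).
Proof.
move=> Mu; have combM s t w : comb (u *m M) (v *m M) (z *m M) s t w = comb u v z s t w *m M.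
  by rewrite /comb !mulmxDl !scalemxAl.
rewrite !subplane_ptE; split; case=> x0 [c [s [t [w Ex]]]].
  split; first by apply: contraNneq x0 => /(canRL (mulmxK Mu))->; rewrite mul0mx.
  by exists c, s, t, w; rewrite combM scalemxAl Ex.
split; first by apply: contraNneq x0 => ->; rewrite mul0mx.
exists c, s, t, w; apply: (row_free_inj (A := M)); first by rewrite row_free_unit.
by rewrite /= Ex combM scalemxAl.
Qed.

Lemma stab_linf_col M (c : L) : M \in unitmx ->
  col ord_max M = c *: delta_mx ord_max 0 -> stab_linf M.
Proof. by move=> Mu Mc; split=> // x x0; rewrite /on_linf (coord3_mulmx x Mc) x0 mul0r. Qed.

Lemma free_pi_basis (omega lambda : L) :
  free [:: vec3 1 0 lambda; vec3 0 1 omega; vec3 0 0 1].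
Proof.
apply/free3P => a b c /rowP E.
move: (E 0) (E 1) (E 2); rewrite !mxE /= !mulr0 !mulr1 !addr0 !add0r.
by move=> a0 b0; rewrite a0 b0 !mul0r !add0r.
Qed.

Lemma subplane_pt_equiv_pi u v z : free [:: u; v; z] -> z ord0 ord_max != 0 ->
  equiv_linf (subplane_pt u v z)
    (pi_ol (v ord0 ord_max / z ord0 ord_max) (u ord0 ord_max / z ord0 ord_max)).
Proof.
move=> fr z3.
set B := rows3 u v z.
set omega := v _ _ / _; set lambda := u _ _ / _.
set T := rows3 (vec3 1 0 lambda) (vec3 0 1 omega) (vec3 0 0 1).
have Bu : B \in unitmx := rows3_unitmx fr.
have Tu : T \in unitmx := rows3_unitmx (free_pi_basis omega lambda).
pose M := invmx B *m T.
have Mu : M \in unitmx by rewrite unitmx_mul unitmx_inv Bu Tu.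
have colT : col ord_max T = (z ord0 ord_max)^-1 *: col ord_max B.
  apply/colP => -[[|[|[|//]]] i3]; by rewrite !mxE /= ?mulVf // mulrC.
have colM : col ord_max M = (z ord0 ord_max)^-1 *: delta_mx ord_max 0.
  by rewrite -col1 -(mulVmx Bu) !colE -!mulmxA -colE colT -scalemxAr -colE.
have rowM i : row i B *m M = row i T by rewrite -row_mul mulmxA mulmxV // mul1mx.
exists M; split; first exact: stab_linf_col colM.
move=> x; rewrite (subplane_pt_mulmx _ _ _ _ Mu).
by move: (rowM 0) (rowM 1) (rowM 2); rewrite !rowK /= => -> -> ->.
Qed.

Lemma external_equiv_pi u v z : free [:: u; v; z] -> external u v z ->
  exists omega lambda : L,
    free [:: 1; omega; lambda] /\ equiv_linf (subplane_pt u v z) (pi_ol omega lambda).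
Proof.
move=> fr ext.
have linf_trivial s t w : comb u v z s t w ord0 ord_max = 0 -> [/\ s = 0, t = 0 & w = 0].
  move=> c3; apply: comb_eq0 fr _.
  by apply/eqP/contraT => /subplane_pt_comb /ext.
have z3 : z ord0 ord_max != 0.
  apply/eqP => z3; have := linf_trivial 0 0 1.
  by rewrite combE z3 !scale0r !mul0r mulr0 !addr0 => /(_ erefl)[_ _ /eqP]; rewrite oner_eq0.
exists (v ord0 ord_max / z ord0 ord_max), (u ord0 ord_max / z ord0 ord_max).
split; last exact: subplane_pt_equiv_pi.
apply/free3P => a b c E.
suff /linf_trivial[-> -> ->] : comb u v z c b a ord0 ord_max = 0 by [].
rewrite combE -[RHS](mul0r (z ord0 ord_max)) -E !mulrDl -!scalerAl !divfK //.
by rewrite !mul1r addrC (addrC (c *: _)) addrA.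
Qed.

Lemma equiv_linf_iff (P P' Q : 'rV[L]_3 -> Prop) :
  (forall x, P x <-> P' x) -> equiv_linf P' Q -> equiv_linf P Q.
Proof. by move=> PP' [M [stM PQ]]; exists M; split=> // x; rewrite PP'. Qed.

Definition linf_kernel_dir u v z (s t w : F) : Prop :=
  comb u v z s t w ord0 ord_max = 0 /\
  forall a b e : F, comb u v z a b e ord0 ord_max = 0 ->
    exists k : L, [/\ a%:A = k * s%:A, b%:A = k * t%:A & e%:A = k * w%:A].

Lemma linf_kernel_dirC12 u v z s t w :
  linf_kernel_dir u v z s t w -> linf_kernel_dir v u z t s w.
Proof.
rewrite /linf_kernel_dir combC12 => -[stw3 dir]; split=> // a b e.
by rewrite combC12 => /dir[k [? ? ?]]; exists k.
Qed.

Lemma linf_kernel_dirC13 u v z s t w :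
  linf_kernel_dir u v z s t w -> linf_kernel_dir z v u w t s.
Proof.
rewrite /linf_kernel_dir combC13 => -[stw3 dir]; split=> // a b e.
by rewrite combC13 => /dir[k [? ? ?]]; exists k.
Qed.

Lemma tangent_linf_kernel_dir u v z : free [:: u; v; z] -> tangent u v z ->
  exists s t w, (s, t, w) != (0, 0, 0) /\ linf_kernel_dir u v z s t w.
Proof.
move=> fr [p [[p0 [c [s [t [w [stw Ep]]]]]] p3 p_uniq]].
have c0 : c != 0 by apply: contraNneq p0 => c0; rewrite Ep c0 scale0r.
exists s, t, w; split=> //; split.
  by move: p3; rewrite /on_linf Ep mxE => /eqP; rewrite mulf_eq0 (negPf c0) => /eqP.
move=> a b e x3; have [/comb_eq0[//|-> -> ->]|x0] := eqVneq (comb u v z a b e) 0.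
  by exists 0; rewrite !mul0r scale0r.
have [d [_ Ex]] := p_uniq _ (subplane_pt_comb x0) x3.
exists (d * c); apply: free3_coord_inj fr _.
by rewrite -[LHS]/(comb u v z a b e) Ex Ep scalerA !scalerDr !scalerA.
Qed.

Lemma linf_kernel_dir_equiv_pi u v z s t w : free [:: u; v; z] -> s != 0 ->
  linf_kernel_dir u v z s t w ->
  exists omega : L, (forall a : F, omega != a%:A) /\
    equiv_linf (subplane_pt u v z) (pi_ol omega 0).
Proof.
move=> fr s0 [stw3 dir].
have dir0 b e : comb u v z 0 b e ord0 ord_max = 0 -> b = 0 /\ e = 0.
  move=> /dir[k [k_s kb ke]]; have k0 : k = 0.
    by move/eqP: k_s; rewrite scale0r eq_sym mulf_eq0 alg_eq0 (negPf s0) orbF => /eqP.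
  by move/eqP: kb; move/eqP: ke; rewrite k0 !mul0r !alg_eq0 => /eqP-> /eqP->.
have z3 : z ord0 ord_max != 0.
  apply/eqP => z3; apply/(negP (oner_neq0 F))/eqP.
  by apply: (proj2 (dir0 0 1 _)); rewrite combE z3 !scale0r !mul0r mulr0 !addr0.
exists (v ord0 ord_max / z ord0 ord_max); split.
  move=> a; apply/eqP => va; apply/(negP (oner_neq0 F))/eqP.
  apply: (proj1 (dir0 1 (- a) _)).
  by rewrite combE scale0r mul0r add0r scale1r mul1r scaleNr mulNr -va mulfVK // subrr.
apply: equiv_linf_iff (fun x => subplane_pt_shear u v z t w x s0) _.
have s0A : s%:A != 0 :> L by rewrite alg_eq0.
have := subplane_pt_equiv_pi (free3_shear t%:A w%:A s0A fr) z3.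
by rewrite -/(comb u v z s t w) stw3 mul0r.
Qed.

Lemma tangent_equiv_pi u v z : free [:: u; v; z] -> tangent u v z ->
  exists omega : L, (forall a : F, omega != a%:A) /\
    equiv_linf (subplane_pt u v z) (pi_ol omega 0).
Proof.
move=> fr /(tangent_linf_kernel_dir fr)[s [t [w [stw dir]]]].
have [s0|s0] := eqVneq s 0; last exact: linf_kernel_dir_equiv_pi fr s0 dir.
have [t0|t0] := eqVneq t 0.
  have w0 : w != 0 by apply: contraNneq stw => w0; rewrite s0 t0 w0.
  have fr' : free [:: z; v; u].
    by rewrite (perm_free (Y := [:: u; v; z])) // -[[:: z; v; u]]/(rev [:: u; v; z]) perm_rev.
  have [omega [omegaF E]] := linf_kernel_dir_equiv_pi fr' w0 (linf_kernel_dirC13 dir).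
  by exists omega; split=> //; apply: equiv_linf_iff E => x; apply: subplane_ptC13.
have fr' : free [:: v; u; z].
  by rewrite (perm_free (Y := [:: u; v; z])) // (perm_catCA [:: v] [:: u] [:: z]).
have [omega [omegaF E]] := linf_kernel_dir_equiv_pi fr' t0 (linf_kernel_dirC12 dir).
by exists omega; split=> //; apply: equiv_linf_iff E => x; apply: subplane_ptC12.
Qed.

End Subplanes.

Theorem lemma3p2 (F : finFieldType) (L : fieldExtType F) (u v z : 'rV[L]_3) :
  free [:: u; v; z] ->
  (external u v z ->
     exists omega lambda : L,
       free [:: 1; omega; lambda] /\ equiv_linf (subplane_pt u v z) (pi_ol omega lambda)) /\
  (tangent u v z ->
     exists omega : L,
       (forall a : F, omega != a%:A) /\ equiv_linf (subplane_pt u v z) (pi_ol omega 0)).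
Proof.
move=> fr; split; [exact: external_equiv_pi | exact: tangent_equiv_pi].
Qed.
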